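(* Let $k\ge1$, and let $\mathcal P=\{p_1,\dots,p_{k^2}\}$ be a family of real polynomials in the commuting variables $x_1,\dots,x_{2k^2}$ admitting an nc representation $p(X,Y)$. Suppose a term $a\,x_i^sx_j^t$ with $a\ne0$ and positive integers $s,t$ occurs in some polynomial of the family, and that for some $c\in\{1,\dots,k\}$ one of $x_i,x_j$ is the $(c,c)$ entry of $X$ and the other is the $(c,c)$ entry of $Y$. Then that polynomial is in position $(c,c)$ of the array $p(X,Y)$.
   Context: The family $\mathcal P$ admits an nc representation $p(X,Y)$ if there are $k\times k$ matrices $X,Y$ whose $2k^2$ entries are the variables $x_1,\dots,x_{2k^2}$, each used exactly once, and a noncommutative polynomial $p$ in two letters with real coefficients such that the matrix $p(X,Y)$ is a $k\times k$ array whose entries are $p_1,\dots,p_{k^2}$, each exactly once. A ''term'' means a monomial with its nonzero coefficient after collecting like terms. *)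

From HB Require Import structures.
From mathcomp Require Import all_boot all_order all_algebra.
From mathcomp Require Import mpoly.
Set Implicit Arguments. Unset Strict Implicit. Unset Printing Implicit Defensive.
Import Order.TTheory GRing.Theory Num.Theory.
Local Open Scope ring_scope.

(* A noncommutative polynomial in two letters X (false) and Y (true) is a
   finite formal sum of coefficients times words; we represent it as a list of
   (coefficient, word) pairs. *)
Definition ncpoly (R : Type) := seq (R * seq bool).

Definition word_eval (A : pzRingType) (k : nat) (X Y : 'M[A]_k) (w : seq bool)
  : 'M[A]_k :=
  foldr (fun b M => (if b then Y else X) *m M) 1%:M w.

Definition nc_eval (R : comNzRingType) (n k : nat) (p : ncpoly R)
  (X Y : 'M[{mpoly R[n]}]_k) : 'M[{mpoly R[n]}]_k :=
  \sum_(t <- p) (t.1%:MP *: word_eval X Y t.2).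

Definition var_matrices (R : comNzRingType) (k : nat)
  (X Y : 'M[{mpoly R[2 * k ^ 2]}]_k) : Prop :=
  exists f : bool * 'I_k * 'I_k -> 'I_(2 * k ^ 2),
    bijective f /\
    (forall i j, X i j = 'X_(f (false, i, j))) /\
    (forall i j, Y i j = 'X_(f (true, i, j))).

Definition nc_representation (R : comNzRingType) (k : nat)
  (P : 'I_(k ^ 2) -> {mpoly R[2 * k ^ 2]})
  (X Y : 'M[{mpoly R[2 * k ^ 2]}]_k) (p : ncpoly R)
  (pos : 'I_k * 'I_k -> 'I_(k ^ 2)) : Prop :=
  var_matrices X Y /\ bijective pos /\
  (forall r s, nc_eval p X Y r s = P (pos (r, s))).

Definition mono2 (n : nat) (i j : 'I_n) (s t : nat) : 'X_{1..n} :=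
  mnm_add (mnm_muln (mnm1 i) s) (mnm_muln (mnm1 j) t).

From HB Require Import structures.
From mathcomp Require Import all_boot all_order all_algebra.
From mathcomp Require Import mpoly.
Set Implicit Arguments. Unset Strict Implicit. Unset Printing Implicit Defensive.
Import Order.TTheory GRing.Theory Num.Theory.
Local Open Scope ring_scope.

(* Each entry of a product of words in X and Y is a sum over paths in the
   index set, and a path contributes a variable of X or Y for each step it
   takes. A monomial built only from the two variables X_cc and Y_cc can
   therefore appear in entry (r, s) only along the constant path at c, which
   forces r = s = c unless the monomial is 1. Since x_i^s x_j^t is such a
   monomial, its nonzero coefficient pins its polynomial to position (c, c). *)

Lemma sum_neq0 (V : nmodType) (I : eqType) (r : seq I) (F : I -> V) :
  \sum_(i <- r) F i != 0 -> exists2 i, i \in r & F i != 0.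
Proof.
move=> sum_nz; apply/hasP; apply: contraNT sum_nz => /hasPn F0.
by rewrite big1_seq // => i /andP[_ /F0]; rewrite negbK => /eqP.
Qed.

Lemma mpolyXU_inj (R : nzRingType) n :
  injective (fun v : 'I_n => 'X_v : {mpoly R[n]}).
Proof.
move=> u v /(congr1 (@msupp n R)) /eqP.
by rewrite !msuppX eqseq_cons andbT eq_mnm1 => /eqP.
Qed.

Lemma mcoeffXM_neq0 (R : nzRingType) n (v : 'I_n) (q : {mpoly R[n]}) m :
  ('X_v * q)@_m != 0 -> exists2 m', q@_m' != 0 & m = (U_(v) + m')%MM.
Proof.
rewrite -mcoeff_msupp -commr_mpolyX (perm_mem (msuppMX _ _)).
by case/mapP=> m'; rewrite mcoeff_msupp; exists m'.
Qed.

Lemma mono2_neq0 n (i j : 'I_n) s t : (0 < s)%N -> mono2 i j s t != 0%MM.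
Proof.
move=> s_gt0; apply: contraTneq s_gt0 => /mnmP/(_ i).
rewrite /mono2 mnmDE !mulmnE mnm1E eqxx mul1n mnm0E => /eqP.
by rewrite addn_eq0 => /andP[/eqP->].
Qed.

Lemma mono2_supp n (i j : 'I_n) s t u :
  (0 < mono2 i j s t u)%N -> (u == i) || (u == j).
Proof.
rewrite /mono2 mnmDE !mulmnE !mnm1E.
by case: eqP => [->|_]; case: eqP => [->|_]; rewrite ?eqxx ?orbT.
Qed.

Section WordEvalDiagonal.

Variables (R : nzRingType) (k n : nat) (X Y : 'M[{mpoly R[n]}]_k).
Variable f : bool * 'I_k * 'I_k -> 'I_n.
Hypotheses (f_inj : injective f)
  (X_var : forall i j, X i j = 'X_(f (false, i, j)))
  (Y_var : forall i j, Y i j = 'X_(f (true, i, j))).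

Definition mnm_on_diag (c : 'I_k) (m : 'X_{1..n}) :=
  forall u, (0 < m u)%N -> exists b, u = f (b, c, c).

Lemma word_eval_cons_entry b w r s :
  word_eval X Y (b :: w) r s = \sum_a 'X_(f (b, r, a)) * word_eval X Y w a s.
Proof.
rewrite /word_eval /= mxE; apply: eq_bigr => a _.
by case: b; rewrite ?X_var ?Y_var.
Qed.

Lemma word_eval_coeff_on_diag c w r s m :
  mnm_on_diag c m -> (word_eval X Y w r s)@_m != 0 ->
  r = s /\ (m = 0%MM \/ r = c).
Proof.
elim: w r m => [|b w IHw] r m m_diag.
  rewrite /word_eval /= mxE mcoeffMn mcoeff1.
  case: (r =P s) => [<-|_]; last by rewrite mulr0n eqxx.
  by case: (m =P 0%MM) => [->|]; [split; [|left] | rewrite mulr1n eqxx].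
rewrite word_eval_cons_entry raddf_sum => /sum_neq0[a _].
case/mcoeffXM_neq0=> m' coeff_nz def_m.
have m'_diag : mnm_on_diag c m'.
  by move=> u m'u; apply: m_diag; rewrite def_m mnmDE (leq_trans m'u) ?leq_addl.
have [b' /f_inj[_ r_c a_c]] : exists b', f (b, r, a) = f (b', c, c).
  by apply: m_diag; rewrite def_m mnmDE mnm1E eqxx.
have [a_s _] := IHw a m' m'_diag coeff_nz.
by split; [rewrite r_c -a_c | right].
Qed.

End WordEvalDiagonal.

Theorem lemma2p18 (R : realFieldType) (k : nat) (hk : (1 <= k)%N)
  (P : 'I_(k ^ 2) -> {mpoly R[2 * k ^ 2]})
  (X Y : 'M[{mpoly R[2 * k ^ 2]}]_k) (p : ncpoly R)
  (pos : 'I_k * 'I_k -> 'I_(k ^ 2))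
  (hrep : nc_representation P X Y p pos)
  (l : 'I_(k ^ 2)) (i j : 'I_(2 * k ^ 2)) (s t : nat)
  (hs : (0 < s)%N) (ht : (0 < t)%N)
  (hterm : (P l)@_(mono2 i j s t) != 0)
  (c : 'I_k)
  (hc : (X c c = 'X_i /\ Y c c = 'X_j) \/ (X c c = 'X_j /\ Y c c = 'X_i)) :
  pos (c, c) = l.
Proof.
have [[f [[g fK _] [X_var Y_var]]] [[pos' _ pos'K] P_eval]] := hrep.
have f_inj : injective f := can_inj fK.
have diag_var u : (u == i) || (u == j) -> exists b, u = f (b, c, c).
  have var_inj := @mpolyXU_inj R (2 * k ^ 2).
  case/orP=> /eqP ->; case: hc => -[Xc Yc].
  - by exists false; apply: var_inj; rewrite /= -Xc X_var.
  - by exists true; apply: var_inj; rewrite /= -Yc Y_var.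
  - by exists true; apply: var_inj; rewrite /= -Yc Y_var.
  - by exists false; apply: var_inj; rewrite /= -Xc X_var.
have mono_diag : mnm_on_diag f c (mono2 i j s t).
  by move=> u /mono2_supp /diag_var.
case def_l: (pos' l) => [r r'].
move: hterm; rewrite -(pos'K l) def_l -P_eval summxE raddf_sum => /sum_neq0[w _].
rewrite mxE /= mcoeffCM mulf_eq0 negb_or => /andP[_ coeff_nz].
have [<- [/eqP|-> //]] :=
  word_eval_coeff_on_diag f_inj X_var Y_var mono_diag coeff_nz.
by rewrite (negbTE (mono2_neq0 i j t hs)).
Qed.
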